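(* Let $f(x)$ and $g(x)$ be two distinct regular formal power series in $\mathbb{C}[[x]]$ such that $[x^1]f=[x^1]g=1$. Then $\mathrm{ord}(f-g)=\mathrm{ord}(g^{\langle-1\rangle}-f^{\langle-1\rangle})$ and $m(f-g)=m(g^{\langle-1\rangle}-f^{\langle-1\rangle})$, where $f^{\langle-1\rangle}$ and $g^{\langle-1\rangle}$ denote the compositional inverses of $f$ and $g$.
   Context: For a formal power series $f(x)=\sum_{n\ge0}a_nx^n\in\mathbb{C}[[x]]$ and $n\in\mathbb{N}_0=\{0,1,2,\dots\}$, $[x^n]f$ denotes the coefficient $a_n$. A formal power series $f$ is called regular if $[x^0]f=0$ and $[x^1]f\neq0$; every regular $f$ has a unique regular compositional inverse $f^{\langle-1\rangle}$ satisfying $f(f^{\langle-1\rangle}(x))=f^{\langle-1\rangle}(f(x))=x$. For a nonzero formal power series $h$, $\mathrm{ord}(h)$ is the least $n\in\mathbb{N}_0$ with $[x^n]h\neq0$, and $m(h)=[x^{\mathrm{ord}(h)}]h\in\mathbb{C}\setminus\{0\}$. *)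

From HB Require Import structures.
From mathcomp Require Import all_boot all_order all_algebra.
From mathcomp Require Import complex.
From mathcomp Require Import boolp reals Rstruct.
Set Implicit Arguments. Unset Strict Implicit. Unset Printing Implicit Defensive.
Import Order.TTheory GRing.Theory Num.Theory.
Local Open Scope ring_scope.

Definition C : Type := complex Rdefinitions.R.

(* Formal power series over C, represented by their coefficient sequence:
   f n = [x^n] f. *)
Definition fps := nat -> C.

Definition fps_one : fps := fun n => (n == 0)%:R.
Definition fpsX : fps := fun n => (n == 1)%:R.
Definition fps_sub (f g : fps) : fps := fun n => f n - g n.
Definition fps_mul (f g : fps) : fps :=
  fun n => \sum_(i < n.+1) f i * g (n - i)%N.
Definition fps_exp (f : fps) (k : nat) : fps := iter k (fps_mul f) fps_one.
(* Composition f(g(x)); meaningful when [x^0] g = 0. *)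
Definition fps_comp (f g : fps) : fps :=
  fun n => \sum_(k < n.+1) f k * fps_exp g k n.

Definition regular (f : fps) : Prop := f 0%N = 0 /\ f 1%N != 0.

Definition comp_inverse (f h : fps) : Prop :=
  regular h /\ fps_comp f h = fpsX /\ fps_comp h f = fpsX.

Definition fps_ord (h : fps) : nat :=
  match pselect (exists n, h n != 0) with
  | left P => ex_minn P
  | right _ => 0%N
  end.

Definition fps_m (h : fps) : C := h (fps_ord h).

(** If [f] and [g] agree below degree [n] and [c] is the coefficient of [x^n]
    in [f - g], then [f \o g^<-1>] equals [x + c x^n] up to degree [n].  The
    coefficient of [x^m] in [f \o q] depends on [q] only through
    [f_1 q_m + (terms in q_1, ..., q_(m-1))], so comparing [f \o f^<-1> = x]
    with [f \o g^<-1>] degree by degree shows that the two inverses agree below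
    degree [n] and that [g^<-1>_n - f^<-1>_n = c]. *)

From HB Require Import structures.
From mathcomp Require Import all_boot all_order all_algebra.
From mathcomp Require Import complex.
From mathcomp Require Import boolp reals Rstruct.
From mathcomp Require Import zify.
Set Implicit Arguments. Unset Strict Implicit. Unset Printing Implicit Defensive.
Import GRing.Theory.
Local Open Scope ring_scope.

Lemma fps_expS (q : fps) k : fps_exp q k.+1 = fps_mul q (fps_exp q k).
Proof. by []. Qed.

Lemma fps_exp1 (q : fps) m : fps_exp q 1 m = q m.
Proof.
rewrite fps_expS /fps_mul big_ord_recr /= subnn /fps_one eqxx mulr1.
rewrite big1 ?add0r // => i _; have := ltn_ord i.
by case: eqP => [|_ _]; [lia | rewrite mulr0].
Qed.

Lemma fps_exp_eq_lt (q r : fps) n : (forall j, (j < n)%N -> q j = r j) ->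
  forall k j, (j < n)%N -> fps_exp q k j = fps_exp r k j.
Proof.
move=> eq_qr; elim=> [//|k IHk] j lt_jn.
rewrite !fps_expS /fps_mul; apply: eq_bigr => i _; have := ltn_ord i => lt_ij.
by rewrite eq_qr ?IHk //; lia.
Qed.

Section ExpNoConstantTerm.

Variable q : fps.
Hypothesis q0 : q 0%N = 0.

Lemma fps_exp_lt (k m : nat) : (m < k)%N -> fps_exp q k m = 0.
Proof.
elim: k m => [//|k IHk] m lt_mk.
rewrite fps_expS /fps_mul big_ord_recl q0 mul0r add0r big1 // => i _.
by rewrite IHk ?mulr0 // lift0; have := ltn_ord i; lia.
Qed.

Lemma fps_exp_diag k : fps_exp q k k = q 1%N ^+ k.
Proof.
elim: k => [|k IHk]; first by rewrite /fps_exp /= /fps_one eqxx.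
rewrite fps_expS /fps_mul big_ord_recl q0 mul0r add0r big_ord_recl /= subn1 IHk.
rewrite big1 ?addr0 ?exprS // => i _.
by rewrite fps_exp_lt ?mulr0 //= /bump /=; have := ltn_ord i; lia.
Qed.

End ExpNoConstantTerm.

Lemma fps_comp_coef1 (f q : fps) : fps_comp f q 1 = f 1%N * q 1%N.
Proof.
by rewrite /fps_comp !big_ord_recl big_ord0 (fps_exp1 q 1) /= /fps_one mulr0 add0r addr0.
Qed.

Lemma fps_comp_eq_lt (f g q : fps) n : (forall k, (k < n)%N -> f k = g k) ->
  forall m, (m < n)%N -> fps_comp f q m = fps_comp g q m.
Proof.
move=> eq_fg m lt_mn; apply: eq_bigr => i _; have := ltn_ord i => lt_im.
by rewrite eq_fg //; lia.
Qed.

Lemma fps_comp_subl (f g q : fps) n : q 0%N = 0 ->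
  (forall k, (k < n)%N -> f k = g k) ->
  fps_comp f q n - fps_comp g q n = (f n - g n) * q 1%N ^+ n.
Proof.
move=> q0 eq_fg; rewrite /fps_comp -sumrB big_ord_recr /= fps_exp_diag // -mulrBl.
by rewrite big1 ?add0r // => i _; rewrite eq_fg ?subrr.
Qed.

Section CompRightArgument.

Variables (f q r : fps).
Hypotheses (q0 : q 0%N = 0) (r0 : r 0%N = 0).

Lemma fps_exp_eq_at m : (forall j, (j < m)%N -> q j = r j) ->
  forall k, (1 < k)%N -> fps_exp q k m = fps_exp r k m.
Proof.
move=> eq_qr [|[|k]] // _.
rewrite (fps_expS q) (fps_expS r) /fps_mul !big_ord_recr /= subnn -!fps_expS.
rewrite !fps_exp_lt // !mulr0 !addr0; apply: eq_bigr => i _.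
have [->|i_gt0] := posnP i; first by rewrite q0 r0 !mul0r.
have := ltn_ord i => lt_im.
by rewrite eq_qr // (fps_exp_eq_lt eq_qr) //; lia.
Qed.

Lemma fps_comp_subr m : (0 < m)%N -> (forall j, (j < m)%N -> q j = r j) ->
  fps_comp f q m - fps_comp f r m = f 1%N * (q m - r m).
Proof.
case: m => [//|m] _ eq_qr.
rewrite /fps_comp -sumrB big_ord_recl subrr add0r big_ord_recl !lift0 !fps_exp1.
rewrite mulrBr big1 ?addr0 // => i _.
by rewrite (fps_exp_eq_at eq_qr) ?subrr.
Qed.

Lemma fps_comp_injr n : f 1%N != 0 ->
  (forall m, (m < n)%N -> fps_comp f q m = fps_comp f r m) ->
  forall j, (j < n)%N -> q j = r j.
Proof.
move=> f1_neq0; elim: n => [//|n IHn] eq_comp j lt_jn.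
have eq_lt : forall i, (i < n)%N -> q i = r i.
  by apply: IHn => m lt_mn; apply: eq_comp; lia.
have [|le_nj] := ltnP j n; first exact: eq_lt.
have -> : j = n by lia.
have [->|n_gt0] := posnP n; first by rewrite q0 r0.
have /eqP := fps_comp_subr n_gt0 eq_lt.
by rewrite eq_comp // subrr eq_sym mulf_eq0 (negbTE f1_neq0) subr_eq0 => /eqP.
Qed.

End CompRightArgument.

Lemma fps_ord_spec (h : fps) : (exists n, h n != 0) ->
  h (fps_ord h) != 0 /\ forall k, (k < fps_ord h)%N -> h k = 0.
Proof.
move=> ex_h; rewrite /fps_ord; case: pselect => [P|//]; case: ex_minnP => n hn min_n.
split=> // k lt_kn; apply/eqP/negPn/negP => hk.
by have := min_n _ hk; rewrite leqNgt lt_kn.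
Qed.

Lemma fps_ord_eq (h : fps) n : (forall k, (k < n)%N -> h k = 0) -> h n != 0 ->
  fps_ord h = n.
Proof.
move=> h_lt hn; have [hord ord_min] := fps_ord_spec (ex_intro _ n hn).
apply/eqP; rewrite eqn_leq; apply/andP; split; rewrite leqNgt; apply/negP => lt.
  by move: hn; rewrite ord_min ?eqxx.
by move: hord; rewrite h_lt ?eqxx.
Qed.

Lemma fps_sub_neq0 (f g : fps) : f <> g -> exists n, fps_sub f g n != 0.
Proof.
move=> neq_fg; apply/not_existsP => eq_fg; apply: neq_fg; apply/funext => n.
by apply/eqP; rewrite -subr_eq0; have := eq_fg n; case: eqP.
Qed.

Theorem theorem2 (f g finv ginv : fps) :
  regular f -> regular g -> f <> g ->
  f 1%N = 1 -> g 1%N = 1 ->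
  comp_inverse f finv -> comp_inverse g ginv ->
  fps_ord (fps_sub f g) = fps_ord (fps_sub ginv finv) /\
  fps_m (fps_sub f g) = fps_m (fps_sub ginv finv).
Proof.
move=> [f0 f1_neq0] [g0 _] neq_fg f1 g1 [[a0 _] [fa _]] [[b0 _] [gb _]].
have [c_neq0 fg_lt] := fps_ord_spec (fps_sub_neq0 neq_fg).
set n := fps_ord (fps_sub f g) in c_neq0 fg_lt *.
have {}fg_lt k : (k < n)%N -> f k = g k by move/fg_lt/eqP; rewrite subr_eq0 => /eqP.
have n_gt1 : (1 < n)%N.
  rewrite ltnNge; apply: contra c_neq0; rewrite /fps_sub.
  by case: (n) => [|[|]] // _; rewrite ?f0 ?g0 ?f1 ?g1 subrr.
have n_neq1 : (n == 1)%N = false by rewrite gtn_eqF.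
have b1 : ginv 1%N = 1.
  by have := congr1 (fun h => h 1%N) gb; rewrite fps_comp_coef1 g1 mul1r.
have fb_lt m : (m < n)%N -> fps_comp f ginv m = fpsX m.
  by move=> lt_mn; rewrite (fps_comp_eq_lt _ fg_lt) // gb.
have fb_n : fps_comp f ginv n = fps_sub f g n.
  by have := fps_comp_subl b0 fg_lt; rewrite gb /fpsX n_neq1 subr0 b1 expr1n mulr1.
have ab_lt : forall j, (j < n)%N -> finv j = ginv j.
  by apply: (fps_comp_injr a0 b0 f1_neq0) => m lt_mn; rewrite fa fb_lt.
have ba_n : fps_sub ginv finv n = fps_sub f g n.
  have := fps_comp_subr f a0 b0 (ltnW n_gt1) ab_lt.
  by rewrite fa fb_n f1 mul1r /fpsX n_neq1 sub0r => ab_n; rewrite -[RHS]opprK ab_n opprB.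
have ord_ba : fps_ord (fps_sub ginv finv) = n.
  by apply: fps_ord_eq; rewrite ?ba_n // => k lt_kn; rewrite /fps_sub ab_lt ?subrr.
by rewrite /fps_m ord_ba ba_n.
Qed.
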